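(* For every integer $n\ge 3$, the square of the path $P_n^2$ admits a signed product cordial labeling.
   Context: A graph $G$ is signed product cordial if there is a vertex labeling $\alpha: V(G)\to\{1,-1\}$ such that, with the induced edge labeling $\alpha^*(uv)=\alpha(u)\alpha(v)$, we have $|v_\alpha(-1)-v_\alpha(1)|\le 1$ and $|e_{\alpha^*}(-1)-e_{\alpha^*}(1)|\le 1$. Here $v_\alpha(x)$ is the number of vertices labeled $x$ and $e_{\alpha^*}(x)$ is the number of edges labeled $x$; such an $\alpha$ is called a signed product cordial labeling. The square of the path $P_n^2$ is the graph obtained from the path $P_n=v_1v_2\cdots v_n$ by additionally joining every two vertices at distance $2$ in $P_n$. Thus its edges are $v_iv_{i+1}$ for $1\le i\le n-1$ and $v_iv_{i+2}$ for $1\le i\le n-2$. *)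

From mathcomp Require Import all_boot all_order all_algebra.
Set Implicit Arguments. Unset Strict Implicit. Unset Printing Implicit Defensive.
Import GRing.Theory Num.Theory.
Local Open Scope ring_scope.

(* Vertices of P_n^2 are v_1..v_n, represented as i : 'I_n (v_{i+1}). *)
Definition sqpath_edge (n : nat) (i j : 'I_n) : bool :=
  ((i < j)%N && ((j == i.+1 :> nat) || (j == i.+2 :> nat))).

Definition is_pm1_labeling (n : nat) (alpha : 'I_n -> int) : Prop :=
  forall i, alpha i = 1 \/ alpha i = -1.

Definition vcount (n : nat) (alpha : 'I_n -> int) (x : int) : nat :=
  #|[set i : 'I_n | alpha i == x]|.

Definition ecount (n : nat) (alpha : 'I_n -> int) (x : int) : nat :=
  #|[set p : 'I_n * 'I_n | sqpath_edge p.1 p.2 && (alpha p.1 * alpha p.2 == x)]|.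

Definition signed_product_cordial_labeling (n : nat) (alpha : 'I_n -> int) : Prop :=
  is_pm1_labeling alpha /\
  (`|(vcount alpha (-1))%:Z - (vcount alpha 1)%:Z| <= 1) /\
  (`|(ecount alpha (-1))%:Z - (ecount alpha 1)%:Z| <= 1).

Definition sqpath_signed_product_cordial (n : nat) : Prop :=
  exists alpha : 'I_n -> int, signed_product_cordial_labeling alpha.

(* Label v_i by (-1)^i.  The vertex labels then alternate, so they are balanced.
   An edge v_i v_j gets the label (-1)^(j-i): the n-1 edges of the path get -1 and
   the n-2 edges joining vertices at distance 2 get 1.  This works for every n. *)

From mathcomp Require Import all_boot all_order all_algebra.
From mathcomp Require Import zify.
Set Implicit Arguments. Unset Strict Implicit. Unset Printing Implicit Defensive.
Import GRing.Theory.

Lemma card_odd_ord n : #|[set i : 'I_n | odd i]| = n./2.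
Proof.
rewrite -sum1dep_card big_mkcond /=.
elim: n => [|n IHn]; first by rewrite big_ord0.
by rewrite big_ord_recr /= IHn uphalf_half; case: odd; rewrite addnC.
Qed.

Lemma card_pairs_at_distance n d :
  #|[set p : 'I_n * 'I_n | p.2 == p.1 + d :> nat]| = n - d.
Proof.
rewrite -sum1dep_card big_mkcond.
rewrite -(pair_bigA _ (fun i j : 'I_n => if j == i + d :> nat then 1 else 0)) /=.
under eq_bigr => i _ do rewrite -big_mkcond (big_ord1_eq _ (fun=> 1%N)).
rewrite -big_mkcond /=.
under eq_bigl => i do rewrite addnC -ltn_subRL.
by rewrite -(big_ord_widen _ (fun=> 1%N) (leq_subr d n)) sum1_card card_ord.
Qed.

Definition alternating_labeling n : 'I_n -> int := fun i => ((-1) ^+ i)%R.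

Lemma alternating_labelingE n (i : 'I_n) :
  alternating_labeling i = (if odd i then -1 else 1)%R.
Proof. by rewrite /alternating_labeling -signr_odd; case: odd. Qed.

Lemma alternating_labeling_pm1 n : is_pm1_labeling (@alternating_labeling n).
Proof. by move=> i; rewrite alternating_labelingE; case: odd; [right | left]. Qed.

Lemma vcount_alternating_neg n : vcount (@alternating_labeling n) (-1)%R = n./2.
Proof.
rewrite /vcount -card_odd_ord; apply: eq_card => i.
by rewrite !inE alternating_labelingE; case: odd.
Qed.

Lemma vcount_alternating_pos n : vcount (@alternating_labeling n) 1%R = uphalf n.
Proof.
have -> : vcount (@alternating_labeling n) 1%R = #|~: [set i : 'I_n | odd i]|.
  by apply: eq_card => i; rewrite !inE alternating_labelingE; case: odd.
have := cardsC [set i : 'I_n | odd i].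
rewrite card_odd_ord card_ord uphalf_half.
have := odd_double_half n; rewrite -addnn; lia.
Qed.

Lemma sqpath_edge_alternating n d (i j : 'I_n) : (d == 1) || (d == 2) ->
  sqpath_edge i j && (alternating_labeling i * alternating_labeling j == (-1) ^+ d)%R
  = (j == i + d :> nat).
Proof.
move=> d12; rewrite /sqpath_edge /alternating_labeling.
move: (nat_of_ord i) (nat_of_ord j) => {}i {}j.
have d_gt0 : 0 < d by case/orP: d12 => /eqP ->.
case: (ltnP i j) => [lt_ij | le_ji] /=; last by apply/esym/negbTE/eqP; lia.
rewrite -(subnKC (ltnW lt_ij)); move: (j - i) => k.
rewrite exprD mulrA -expr2 sqrr_sign mul1r -addn2 -addn1 !eqn_add2l.
by case/orP: d12 => /eqP ->; case: k => [|[|[|k]]].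
Qed.

Lemma ecount_alternating n d : (d == 1) || (d == 2) ->
  ecount (@alternating_labeling n) ((-1) ^+ d)%R = n - d.
Proof.
move=> d12; rewrite /ecount -(card_pairs_at_distance n d); apply: eq_card => p.
by rewrite !inE sqpath_edge_alternating.
Qed.

Lemma alternating_labeling_cordial n :
  signed_product_cordial_labeling (@alternating_labeling n).
Proof.
have e_neg : ecount (@alternating_labeling n) (-1)%R = n - 1.
  by rewrite -(@ecount_alternating n 1) ?expr1.
have e_pos : ecount (@alternating_labeling n) 1%R = n - 2.
  by rewrite -(@ecount_alternating n 2) ?sqrrN1.
split; first exact: alternating_labeling_pm1.
rewrite vcount_alternating_neg vcount_alternating_pos uphalf_half e_neg e_pos.
by split; lia.
Qed.

Theorem theorem2p3 (n : nat) : (3 <= n)%N -> sqpath_signed_product_cordial n.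
Proof. by move=> _; exists (@alternating_labeling n); apply: alternating_labeling_cordial. Qed.
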